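(* For every integer $n\ge 2$, \[ \gamma_{2t}(K_n\Box K_n)=\begin{cases}3n/2, & n\equiv 0\pmod 4,\\ (3n+1)/2, & n\equiv 1\pmod 2,\\ (3n+2)/2, & n\equiv 2\pmod 4.\end{cases} \]
   Context: For a graph $G=(V,E)$, a set $S\subseteq V$ is a total $2$-dominating set if every vertex of $V$ (including those in $S$) is adjacent to at least $2$ vertices of $S$; $\gamma_{2t}(G)$ is the minimum cardinality of such a set. $G\Box H$ denotes the Cartesian product: vertex set $V(G)\times V(H)$, with $(u_1,v_1)\sim(u_2,v_2)$ iff either $u_1=u_2$ and $v_1\sim v_2$, or $v_1=v_2$ and $u_1\sim u_2$. $K_n$ is the complete graph on $n$ vertices. *)

From mathcomp Require Import all_boot.
Set Implicit Arguments. Unset Strict Implicit. Unset Printing Implicit Defensive.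

Definition nbhd (T : finType) (adj : rel T) (v : T) : {set T} := [set u | adj v u].

Definition total_k_dominating (T : finType) (adj : rel T) (k : nat) (S : {set T}) : bool :=
  [forall v, k <= #|nbhd adj v :&: S|].

Definition total_2_dominating (T : finType) (adj : rel T) (S : {set T}) : bool :=
  total_k_dominating adj 2 S.

Definition is_gamma2t (T : finType) (adj : rel T) (m : nat) : Prop :=
  (exists S : {set T}, total_2_dominating adj S /\ #|S| = m) /\
  (forall S : {set T}, total_2_dominating adj S -> m <= #|S|).

Definition K_adj (n : nat) : rel 'I_n := fun x y => x != y.

Definition cart_adj (T1 T2 : finType) (a1 : rel T1) (a2 : rel T2) : rel (T1 * T2) :=
  fun p q => ((p.1 == q.1) && a2 p.2 q.2) || ((p.2 == q.2) && a1 p.1 q.1).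

From mathcomp Require Import all_boot zify.
Set Implicit Arguments. Unset Strict Implicit. Unset Printing Implicit Defensive.

(* A set S of cells of K_n [] K_n is total 2-dominating iff every cell (i, j)
   satisfies r_i + c_j >= 2 + 2[(i, j) in S], where r_i and c_j count the cells
   of S in row i and column j.  If some line is empty, each crossing line holds
   two cells, so |S| >= 2n.  Otherwise call a cell a leaf of its row if it is
   alone in its column; every row satisfies
   3 + (leaves of row i) + [r_i even] <= 2 r_i + [r_i = 1], and summing this
   over rows and over columns the leaf terms cancel, leaving
   6n + (even rows) + (even columns) <= 4|S|.  When n = 2 (mod 4) equality
   |S| = 3n/2 would make every line odd, hence |S| = n (mod 2): impossible.
   Conversely, about n/4 "hub" rows and columns, each crossed by three lines of
   the other kind holding a single cell, give a set of the right size. *)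

Section LineCounts.

Variables I J : finType.
Implicit Types P : I -> J -> bool.

Definition rowc P i := \sum_j P i j.
Definition colc P j := \sum_i P i j.

Definition line_2_dominating P := forall i j, 2 + 2 * P i j <= rowc P i + colc P j.

Definition leaf_cells P i := \sum_j (P i j && (colc P j == 1)).

Lemma sum_rowc P : \sum_i rowc P i = \sum_j colc P j.
Proof. exact: exchange_big. Qed.

Lemma sum_colc_empty_row P i :
  line_2_dominating P -> rowc P i = 0 -> 2 * #|J| <= \sum_j colc P j.
Proof.
move=> dom row_i0; have /eqP := row_i0; rewrite sum_nat_eq0 => /forall_inP cell0.
rewrite mulnC -sum_nat_const; apply: leq_sum => j _.
by have := dom i j; have := cell0 j isT; rewrite row_i0; case: (P i j).
Qed.

Lemma leaf_cells_bound P i :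
  line_2_dominating P -> 0 < rowc P i ->
  3 + leaf_cells P i + ~~ odd (rowc P i) <= 2 * rowc P i + (rowc P i == 1).
Proof.
move=> dom row_gt0.
have [row_le2|row_gt2] := leqP (rowc P i) 2.
  suff -> : leaf_cells P i = 0 by lia.
  apply: big1 => j _; case Pij: (P i j) => //=.
  by have := dom i j; rewrite Pij; case: eqP; lia.
have : leaf_cells P i <= rowc P i.
  by apply: leq_sum => j _; case: (P i j) => //; apply: leq_b1.
have [->|] := eqVneq (rowc P i) 3; lia.
Qed.

Lemma sum_leaf_cells P : \sum_i leaf_cells P i = \sum_j (colc P j == 1).
Proof.
rewrite exchange_big; apply: eq_bigr => j _.
case: eqP => [col_j1|_]; last by apply: big1 => i _; rewrite andbF.
by rewrite -[RHS]col_j1; apply: eq_bigr => i _; rewrite andbT.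
Qed.

Lemma sum_rowc_bound P :
  line_2_dominating P -> (forall i, 0 < rowc P i) ->
  3 * #|I| + \sum_j (colc P j == 1) + \sum_i ~~ odd (rowc P i)
    <= 2 * \sum_i rowc P i + \sum_i (rowc P i == 1).
Proof.
move=> dom rows_gt0.
rewrite -sum_leaf_cells mulnC -sum_nat_const -!big_split big_distrr -big_split.
by apply: leq_sum => i _; apply: leaf_cells_bound.
Qed.

End LineCounts.

Lemma odd_sum_odd (T : finType) (F : T -> nat) :
  (forall x, odd (F x)) -> odd (\sum_x F x) = odd #|T|.
Proof.
move=> F_odd; rewrite -sum1_card.
apply: (big_ind2 (fun a b => odd a = odd b)) => // [a1 a2 b1 b2 e1 e2|x _].
  by rewrite !oddD e1 e2.
by rewrite F_odd.
Qed.

Definition transpose (I J : finType) (P : I -> J -> bool) : J -> I -> bool :=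
  fun j i => P i j.

Section Transpose.

Variables (I J : finType) (P : I -> J -> bool).

Lemma rowc_transpose : rowc (transpose P) = colc P. Proof. by []. Qed.
Lemma colc_transpose : colc (transpose P) = rowc P. Proof. by []. Qed.

Lemma line_2_dominating_transpose :
  line_2_dominating P -> line_2_dominating (transpose P).
Proof.
by move=> dom j i; rewrite rowc_transpose colc_transpose [X in _ <= X]addnC; apply: dom.
Qed.

Lemma line_2_dominating_card_lb :
  line_2_dominating P -> (forall i, 0 < rowc P i) -> (forall j, 0 < colc P j) ->
  3 * (#|I| + #|J|) + \sum_i ~~ odd (rowc P i) + \sum_j ~~ odd (colc P j)
    <= 4 * \sum_i rowc P i.
Proof.
move=> dom rows_gt0 cols_gt0.
have := sum_rowc_bound dom rows_gt0.
have := sum_rowc_bound (line_2_dominating_transpose dom) cols_gt0.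
rewrite rowc_transpose colc_transpose -sum_rowc; lia.
Qed.

End Transpose.

Definition gamma_rook n :=
  if n %% 4 == 0 then (3 * n) %/ 2
  else if odd n then (3 * n + 1) %/ 2
  else (3 * n + 2) %/ 2.

Lemma gamma_rook_le_double n : gamma_rook n <= 2 * n.
Proof. by rewrite /gamma_rook; do 2?case: ifP; lia. Qed.

Lemma gamma_rook_le_of_bound n m e :
  6 * n + e <= 4 * m -> (e = 0 -> odd m = odd n) -> gamma_rook n <= m.
Proof. by rewrite /gamma_rook => le_m par; do 2?case: ifP; lia. Qed.

Lemma gamma_rook_lb (I J : finType) (P : I -> J -> bool) :
  #|J| = #|I| -> line_2_dominating P -> gamma_rook #|I| <= \sum_i rowc P i.
Proof.
move=> card_JI dom.
case: (boolP [exists i, rowc P i == 0]) => [/existsP[i /eqP row_i0]|/existsPn rows_ne0].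
  apply: leq_trans (gamma_rook_le_double _) _.
  by rewrite sum_rowc -card_JI; apply: sum_colc_empty_row row_i0.
case: (boolP [exists j, colc P j == 0]) => [/existsP[j /eqP col_j0]|/existsPn cols_ne0].
  apply: leq_trans (gamma_rook_le_double _) _.
  exact: sum_colc_empty_row (line_2_dominating_transpose dom) col_j0.
have rows_gt0 i : 0 < rowc P i by rewrite lt0n rows_ne0.
have cols_gt0 j : 0 < colc P j by rewrite lt0n cols_ne0.
have := line_2_dominating_card_lb dom rows_gt0 cols_gt0.
rewrite card_JI -addnA mulnDr -[3 * _ + _]mulnDl => /gamma_rook_le_of_bound; apply.
move=> /eqP; rewrite addn_eq0 sum_nat_eq0 => /andP[/forall_inP rows_odd _].
by apply: odd_sum_odd => i; have := rows_odd i isT; case: odd.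
Qed.

Definition cells (I J : finType) (S : {set I * J}) : I -> J -> bool :=
  fun i j => (i, j) \in S.

Lemma card_cells (I J : finType) (S : {set I * J}) : #|S| = \sum_i rowc (cells S) i.
Proof.
rewrite -sum1_card big_mkcond /rowc pair_bigA.
by apply: eq_bigr => -[i j] _; rewrite /cells; case: (_ \in S).
Qed.

Lemma sum_line_cells (I J : finType) (S : {set I * J}) (i : I) (j : J) :
  rowc (cells S) i = \sum_p ((p.1 == i) && (p \in S)) /\
  colc (cells S) j = \sum_p ((p.2 == j) && (p \in S)).
Proof.
split.
  transitivity (\sum_a \sum_b ((a == i) && ((a, b) \in S))).
    rewrite (bigD1 i) //= [X in _ + X]big1 ?addn0.
      by apply: eq_bigr => b _; rewrite eqxx.
    by move=> a /negbTE a_ne_i; apply: big1 => b _; rewrite a_ne_i.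
  by rewrite pair_bigA; apply: eq_bigr => -[].
transitivity (\sum_a \sum_b ((b == j) && ((a, b) \in S))).
  rewrite exchange_big (bigD1 j) //= [X in _ + X]big1 ?addn0.
    by apply: eq_bigr => a _; rewrite eqxx.
  by move=> b /negbTE b_ne_j; apply: big1 => a _; rewrite b_ne_j.
by rewrite pair_bigA; apply: eq_bigr => -[].
Qed.

Lemma card_nbhd_rook m n (S : {set 'I_m * 'I_n}) i j :
  #|nbhd (cart_adj (@K_adj m) (@K_adj n)) (i, j) :&: S| + 2 * cells S i j
    = rowc (cells S) i + colc (cells S) j.
Proof.
have [-> ->] := sum_line_cells S i j.
rewrite -sum1_card big_mkcond -big_split /=.
rewrite (bigD1 (i, j)) // [RHS](bigD1 (i, j)) //= !inE /cart_adj /K_adj /= !eqxx /=.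
rewrite add0n addnn -mul2n addnC; congr (_ + _).
apply: eq_bigr => -[a b]; rewrite !inE /= xpair_eqE negb_and => ne_ab.
rewrite ![_ == i]eq_sym ![_ == j]eq_sym in ne_ab *.
by move: ne_ab; case: (i == a); case: (j == b); case: (_ \in S).
Qed.

Lemma total_2_dominating_rookE m n (S : {set 'I_m * 'I_n}) :
  total_2_dominating (cart_adj (@K_adj m) (@K_adj n)) S <-> line_2_dominating (cells S).
Proof.
split=> [/forallP dom i j|dom]; last apply/forallP => -[i j].
  by have := dom (i, j); have := card_nbhd_rook S i j; lia.
by have := dom i j; have := card_nbhd_rook S i j; lia.
Qed.

Lemma line_2_dominating_hubs (I J : finType) (P : I -> J -> bool) :
  (forall i, 0 < rowc P i) -> (forall j, 0 < colc P j) ->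
  (forall i j, P i j -> (2 < rowc P i) || (2 < colc P j)) ->
  line_2_dominating P.
Proof.
move=> rows_gt0 cols_gt0 hub i j; have := rows_gt0 i; have := cols_gt0 j.
by case Pij: (P i j); [case/orP: (hub i j Pij)|]; lia.
Qed.

Lemma sum_ord_count (G : pred nat) n : \sum_(b < n) G b = count G (iota 0 n).
Proof.
rewrite -(big_mkord (fun _ => true) (fun b => nat_of_bool (G b))).
rewrite -sum1_count [RHS]big_mkcond /index_iota subn0.
by apply: eq_bigr => b _; case: (G b).
Qed.

Lemma size_le_sum_ord (G : pred nat) n s :
  uniq s -> all (fun x => (x < n) && G x) s -> size s <= \sum_(b < n) G b.
Proof.
move=> s_uniq /allP s_sub; rewrite sum_ord_count -size_filter.
apply: uniq_leq_size => // x /s_sub /andP[x_lt_n Gx].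
by rewrite mem_filter Gx mem_iota.
Qed.

Lemma sum_ord_eq_le (c : bool) n (x : nat) : \sum_(b < n) (c && (b == x :> nat)) <= c.
Proof.
case: c; last by rewrite big1.
by rewrite (sum_ord_count (pred1 x)) count_uniq_mem ?iota_uniq ?leq_b1.
Qed.

Lemma sum_ord_geq a n : \sum_(i < n) (a <= i) = n - a.
Proof.
elim: n => [|n IH]; first by rewrite big_ord0.
by rewrite big_ord_recr /= IH; case: leqP; lia.
Qed.

Definition nhubs n := if n %% 4 == 3 then n %/ 4 + 1 else n %/ 4.

Definition hub n i := minn ((i - nhubs n) %/ 3) (nhubs n).-1.

(* Line i >= nhubs n carries one cell, crossing the hub line hub n i; each hub
   receives three such lines, except the last one when n = 3 (mod 4), which
   receives two and the diagonal cell instead. *)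
Definition star n i j : bool :=
  [|| (nhubs n <= i) && (j == hub n i), (nhubs n <= j) && (i == hub n j)
    | [&& n %% 4 == 3, i == (nhubs n).-1 & j == (nhubs n).-1]].

Lemma nhubs_bounds n :
  3 <= n -> 0 < nhubs n /\ 4 * nhubs n = n - n %% 4 + 4 * (n %% 4 == 3).
Proof. by rewrite /nhubs; case: ifP; lia. Qed.

Lemma star_sym n i j : star n i j = star n j i.
Proof. by rewrite /star orbCA [(i == _) && _]andbC. Qed.

Lemma star_hub n i j : 3 <= n -> star n i j -> (i < nhubs n) || (j < nhubs n).
Proof.
move=> /nhubs_bounds[hubs_gt0 _]; rewrite /star /hub.
by case/or3P => [/andP[_ /eqP->]|/andP[_ /eqP->]|/and3P[_ /eqP-> _]]; lia.
Qed.

Lemma hub_attached n i t : i < nhubs n -> t < 3 -> hub n (nhubs n + 3 * i + t) = i.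
Proof. rewrite /hub; lia. Qed.

Lemma star_attached n i t : i < nhubs n -> t < 3 -> star n i (nhubs n + 3 * i + t).
Proof. by move=> i_lt t_lt; rewrite /star hub_attached // eqxx -addnA leq_addr orbT. Qed.

Lemma star_row_gt0 n i : 3 <= n -> i < n -> 0 < \sum_(b < n) star n i b.
Proof.
move=> n_ge3 i_lt_n; have [hubs_gt0 hubsE] := nhubs_bounds n_ge3.
have [hubs_le_i|i_lt_hubs] := leqP (nhubs n) i.
  apply: (@size_le_sum_ord _ _ [:: hub n i]) => //=.
  by rewrite /star hubs_le_i eqxx /hub; lia.
apply: (@size_le_sum_ord _ _ [:: nhubs n + 3 * i + 0]) => //=.
by rewrite star_attached // andbT; lia.
Qed.

Lemma star_row_gt2 n i : 3 <= n -> i < nhubs n -> 2 < \sum_(b < n) star n i b.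
Proof.
move=> n_ge3 i_lt_hubs; have [hubs_gt0 hubsE] := nhubs_bounds n_ge3.
pose x t := nhubs n + 3 * i + t.
have x_star t : t < 3 -> star n i (x t) by apply: star_attached.
have [/andP[n3 /eqP i_last]|not_last] := boolP ((n %% 4 == 3) && (i == (nhubs n).-1)).
  apply: (@size_le_sum_ord _ _ [:: x 0; x 1; i]); first by rewrite /= !inE /x; lia.
  have star_ii : star n i i by rewrite /star n3 i_last eqxx !orbT.
  by rewrite /= !x_star // star_ii /x; lia.
apply: (@size_le_sum_ord _ _ [:: x 0; x 1; x 2]); first by rewrite /= !inE /x; lia.
by rewrite /= !x_star //= /x; move: not_last; lia.
Qed.

Lemma star_budget n : 3 <= n -> 2 * (n - nhubs n) + (n %% 4 == 3) <= gamma_rook n.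
Proof. by rewrite /gamma_rook /nhubs; do 3?case: ifP; lia. Qed.

Lemma sum_star n : 3 <= n -> \sum_(i < n) \sum_(j < n) star n i j <= gamma_rook n.
Proof.
move=> n_ge3.
pose attached (i j : 'I_n) := (nhubs n <= i) && (nat_of_ord j == hub n i).
pose last_loop (i j : 'I_n) :=
  [&& n %% 4 == 3, nat_of_ord i == (nhubs n).-1 & nat_of_ord j == (nhubs n).-1].
have split_star : \sum_(i < n) \sum_(j < n) star n i j <=
    \sum_i \sum_j attached i j + \sum_i \sum_j attached j i + \sum_i \sum_j last_loop i j.
  rewrite -!big_split; apply: leq_sum => i _; rewrite -!big_split; apply: leq_sum => j _.
  rewrite /star /attached /last_loop.
  by case: (_ && _); case: (_ && _); case: [&& _, _ & _].
have attached_le : \sum_i \sum_j attached i j <= n - nhubs n.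
  by rewrite -sum_ord_geq; apply: leq_sum => i _; apply: sum_ord_eq_le.
have last_loop_le : \sum_i \sum_j last_loop i j <= (n %% 4 == 3).
  apply: leq_trans (sum_ord_eq_le _ n (nhubs n).-1); apply: leq_sum => i _.
  by rewrite /last_loop; under eq_bigr do rewrite andbA; apply: sum_ord_eq_le.
have attached_tr_le : \sum_i \sum_j attached j i <= n - nhubs n.
  by rewrite exchange_big.
have := star_budget n_ge3; lia.
Qed.

Lemma rook_2_dominating_le_gamma n :
  2 <= n ->
  exists S : {set 'I_n * 'I_n}, line_2_dominating (cells S) /\ #|S| <= gamma_rook n.
Proof.
rewrite leq_eqVlt => /orP[/eqP<-|n_gt2].
  exists setT; split; last by rewrite cardsT card_prod card_ord.
  by move=> i j; rewrite /rowc /colc /cells !big_ord_recr !big_ord0 !inE.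
pose S := [set p : 'I_n * 'I_n | star n p.1 p.2].
have rowcS i : rowc (cells S) i = \sum_(b < n) star n i b.
  by apply: eq_bigr => b _; rewrite /cells inE.
have colcS j : colc (cells S) j = \sum_(b < n) star n j b.
  by apply: eq_bigr => b _; rewrite /cells inE star_sym.
exists S; split; last first.
  by rewrite card_cells; under eq_bigr do rewrite rowcS; apply: sum_star.
apply: line_2_dominating_hubs => [i|j|i j]; rewrite ?rowcS ?colcS.
- exact: star_row_gt0.
- exact: star_row_gt0.
rewrite /cells inE => /(star_hub n_gt2)/orP[] hub_line; apply/orP; [left|right].
  exact: star_row_gt2.
exact: star_row_gt2.
Qed.

Theorem theorem9 (n : nat) (hn : 2 <= n) :
  is_gamma2t (cart_adj (@K_adj n) (@K_adj n))
    (if n %% 4 == 0 then (3 * n) %/ 2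
     else if odd n then (3 * n + 1) %/ 2
     else (3 * n + 2) %/ 2).
Proof.
rewrite -/(gamma_rook n).
have lb (S : {set 'I_n * 'I_n}) :
    total_2_dominating (cart_adj (@K_adj n) (@K_adj n)) S -> gamma_rook n <= #|S|.
  move=> /total_2_dominating_rookE domS.
  by have := gamma_rook_lb (erefl _) domS; rewrite card_ord -card_cells.
have [S [domS cardS]] := rook_2_dominating_le_gamma hn.
split=> //; exists S; split; first exact/total_2_dominating_rookE.
by apply/eqP; rewrite eqn_leq cardS lb //; apply/total_2_dominating_rookE.
Qed.
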